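(* Let $n\ge0$ be an integer with $\chi_n>c^2$. Let $x_1<x_2<\dots$ be the roots of $\psi_n$ in $(1,\infty)$ and $y_1<y_2<\dots$ the roots of $\psi_n'$ in $(1,\infty)$. Then $$1<\frac{\sqrt{\chi_n}}{c}<y_1<x_1<y_2<x_2<\cdots.$$
   Context: For a real number $c>0$, let $\psi_0,\psi_1,\dots$ be the prolate spheroidal wave functions of band limit $c$: the real $L^2[-1,1]$-normalized eigenfunctions of $F_c[\varphi](x)=\int_{-1}^1\varphi(t)e^{icxt}\,dt$ with eigenvalues $\lambda_n$ ordered by $|\lambda_n|\ge|\lambda_{n+1}|$, extended to entire functions by $\lambda_n\psi_n(x)=\int_{-1}^1\psi_n(t)e^{icxt}\,dt$. $\chi_0<\chi_1<\dots$ are the positive numbers such that $\psi_n$ satisfies $(1-x^2)\psi''(x)-2x\psi'(x)+(\chi_n-c^2x^2)\psi(x)=0$ for all $x$. *)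

From Stdlib Require Import Reals.
From Coquelicot Require Import Coquelicot.
Open Scope R_scope.

Definition expi (theta : R) : C := (cos theta, sin theta).

Definition fourier_eigen (c : R) (f : R -> R) (mu : C) (x : R) : Prop :=
  is_RInt (fun t : R => RtoC (f t) * expi (c * x * t))%C (-1) 1 (mu * RtoC (f x))%C.

(* The prolate spheroidal wave functions of band limit c:
   psi n  (restricted to the real line; the entire extension is given by
           lambda_n psi_n(x) = int_{-1}^1 psi_n(t) e^{icxt} dt for all real x),
   lam n  the eigenvalues, chi n the ODE eigenvalues. *)
Definition pswf_system (c : R) (psi : nat -> R -> R) (lam : nat -> C)
    (chi : nat -> R) : Prop :=
  (forall n x, fourier_eigen c (psi n) (lam n) x) /\
  (forall n, lam n <> 0%C) /\
  (forall n, is_RInt (fun t => psi n t ^ 2) (-1) 1 1) /\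
  (forall n m, n <> m -> is_RInt (fun t => psi n t * psi m t) (-1) 1 0) /\
  (forall n, Cmod (lam (S n)) <= Cmod (lam n)) /\
  (forall (f : R -> R) (mu : C),
      (exists v, 0 < v /\ is_RInt (fun t => f t ^ 2) (-1) 1 v) ->
      (forall x, -1 <= x <= 1 -> fourier_eigen c f mu x) ->
      exists n k, forall x, -1 <= x <= 1 -> f x = k * psi n x) /\
  (forall n, 0 < chi n) /\
  (forall n, chi n < chi (S n)) /\
  (forall n x, ex_derive (psi n) x /\ ex_derive (Derive (psi n)) x) /\
  (forall n x,
      (1 - x ^ 2) * Derive (Derive (psi n)) x - 2 * x * Derive (psi n) x
      + (chi n - c ^ 2 * x ^ 2) * psi n x = 0).

From Stdlib Require Import Reals Lra Lia Classical ClassicalEpsilon.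
From Coquelicot Require Import Coquelicot.
Open Scope R_scope.

(* On (1, oo) the equation reads ((x^2 - 1) f')' = (chi - c^2 x^2) f.  A Gronwall estimate,
   supplemented by a separate argument at the singular point 1, shows that f and f' never
   vanish together; in particular f(1) <> 0.  Up to the turning point sqrt(chi)/c the quantity
   f (x^2 - 1) f' increases from 0, so neither f nor f' vanishes there.  Beyond it, the
   Riccati quotient (x^2 - 1) f'/f decreases wherever f <> 0, so after a critical point
   there is no further critical point before the next zero; and after a zero f is monotone,
   hence has no further zero, until the next critical point.  Sturm comparison of the
   Liouville normal form sqrt(x^2 - 1) f with a sine of frequency c/2 makes the zeros
   unbounded, and they cannot accumulate because f and f' have no common zero. *)

(** * Calculus on the real line *)

Lemma continuity_pt_ex_derive (g : R -> R) x : ex_derive g x -> continuity_pt g x.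
Proof.
  intros H. apply continuity_pt_filterlim.
  exact (ex_derive_continuous (K := R_AbsRing) (V := R_NormedModule) g x H).
Qed.

Lemma MVT_closed (g dg : R -> R) u v : u <= v ->
  (forall x, u <= x <= v -> is_derive g x (dg x)) ->
  exists xi, u <= xi <= v /\ g v - g u = dg xi * (v - u).
Proof.
  intros Huv Hd. destruct (MVT_gen g u v dg) as [xi [Hxi Heq]].
  - intros x Hx. rewrite Rmin_left, Rmax_right in Hx by lra. apply Hd; lra.
  - intros x Hx. rewrite Rmin_left, Rmax_right in Hx by lra.
    apply continuity_pt_ex_derive. exists (dg x). apply Hd; lra.
  - rewrite Rmin_left, Rmax_right in Hxi by lra. now exists xi.
Qed.

Lemma nondecreasing_of_derive_nonneg (g dg : R -> R) u v : u <= v ->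
  (forall x, u <= x <= v -> is_derive g x (dg x)) ->
  (forall x, u <= x <= v -> 0 <= dg x) -> g u <= g v.
Proof.
  intros Huv Hd Hpos. destruct (MVT_closed g dg u v Huv Hd) as [xi [Hxi Heq]].
  specialize (Hpos xi Hxi). nra.
Qed.

Lemma increasing_of_derive_pos (g dg : R -> R) u v : u < v ->
  (forall x, u <= x <= v -> is_derive g x (dg x)) ->
  (forall x, u <= x <= v -> 0 < dg x) -> g u < g v.
Proof.
  intros Huv Hd Hpos. destruct (MVT_closed g dg u v (Rlt_le _ _ Huv) Hd) as [xi [Hxi Heq]].
  specialize (Hpos xi Hxi). nra.
Qed.

Lemma Rabs_sub_le_of_derive_bound (g dg : R -> R) u v M : u <= v ->
  (forall x, u <= x <= v -> is_derive g x (dg x)) ->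
  (forall x, u <= x <= v -> Rabs (dg x) <= M) -> Rabs (g v - g u) <= M * (v - u).
Proof.
  intros Huv Hd HM. destruct (MVT_closed g dg u v Huv Hd) as [xi [Hxi ->]].
  rewrite Rabs_mult, (Rabs_right (v - u)) by lra.
  apply Rmult_le_compat_r; [lra | now apply HM].
Qed.

Lemma derive_sign_nearby (g : R -> R) r l : is_derive g r l -> l <> 0 ->
  exists d, 0 < d /\ forall h, h <> 0 -> Rabs h < d -> 0 < (g (r + h) - g r) * h * l.
Proof.
  intros Hd Hl. apply is_derive_Reals in Hd.
  destruct (Hd (Rabs l)) as [d Hdl]; [now apply Rabs_pos_lt|].
  exists d; split; [apply cond_pos|]. intros h Hh Hhd.
  specialize (Hdl h Hh Hhd). set (q := (g (r + h) - g r) / h) in Hdl.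
  replace ((g (r + h) - g r) * h * l) with (q * l * Rsqr h)
    by (unfold q, Rsqr; field; exact Hh).
  apply Rmult_lt_0_compat; [|now apply Rsqr_pos_lt].
  destruct (Rle_lt_dec 0 l).
  - rewrite (Rabs_right l) in Hdl by lra. apply Rabs_def2 in Hdl. nra.
  - rewrite (Rabs_left l) in Hdl by lra. apply Rabs_def2 in Hdl. nra.
Qed.

Lemma nonzero_right_of (g : R -> R) t : continuity_pt g t ->
  (g t = 0 -> exists l, is_derive g t l /\ l <> 0) ->
  exists e, 0 < e /\ forall r, t < r < t + e -> g r <> 0.
Proof.
  intros Hc Hsimple. destruct (Req_dec (g t) 0) as [H0|Hn].
  - destruct (Hsimple H0) as [l [Hd Hl]].
    destruct (derive_sign_nearby g t l Hd Hl) as [d [Hd0 Hs]].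
    exists d; split; [exact Hd0|]. intros r Hr Hgr.
    specialize (Hs (r - t)). replace (t + (r - t)) with r in Hs by ring.
    rewrite Hgr, H0, Rabs_right in Hs by lra. specialize (Hs ltac:(lra) ltac:(lra)). lra.
  - destruct (Hc (Rabs (g t))) as [d [Hd0 Hd]]; [now apply Rabs_pos_lt|].
    exists d; split; [exact Hd0|]. intros r Hr Hgr.
    assert (H := Hd r). simpl in H. unfold R_dist in H.
    rewrite Hgr, Rminus_0_l, Rabs_Ropp in H.
    enough (Rabs (g t) < Rabs (g t)) by lra.
    apply H. split; [split; [exact I | lra]|]. rewrite Rabs_right; lra.
Qed.

Lemma continuity_pt_zero_right (g : R -> R) x : continuity_pt g x ->
  (forall y, x < y -> g y = 0) -> g x = 0.
Proof.
  intros Hc Hy. apply NNPP. intros Hn.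
  destruct (nonzero_right_of g x Hc (fun H => False_ind _ (Hn H))) as [e [He Hne]].
  apply (Hne (x + e / 2)); [lra | apply Hy; lra].
Qed.

Lemma first_root_after (g : R -> R) t p :
  (forall x, continuity_pt g x) -> t < p -> g p = 0 ->
  (exists e, 0 < e /\ forall r, t < r < t + e -> g r <> 0) ->
  exists s, t < s /\ g s = 0 /\ forall r, t < r < s -> g r <> 0.
Proof.
  intros Hc Htp Hp [e [He Hne]].
  set (E := fun s => s <= p /\ forall r, t < r < s -> g r <> 0).
  destruct (completeness E) as [s [Hub Hlub]].
  { exists p. intros s [Hs _]. exact Hs. }
  { exists t. split; [lra | intros r Hr; lra]. }
  assert (Hfree : forall r, t < r < s -> g r <> 0).
  { intros r Hr Hgr. enough (s <= r) by lra.
    apply Hlub. intros s' [_ Hs']. apply Rnot_lt_le. intros Hrs'. now apply (Hs' r). }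
  assert (Hts : t < s).
  { enough (E (t + Rmin e (p - t) / 2)).
    { apply Hub in H. assert (0 < Rmin e (p - t)) by (apply Rmin_pos; lra). lra. }
    assert (Rmin e (p - t) <= e) by apply Rmin_l.
    assert (Rmin e (p - t) <= p - t) by apply Rmin_r.
    split; [lra|]. intros r Hr. apply Hne. lra. }
  exists s. split; [exact Hts|]. split; [|exact Hfree].
  apply NNPP. intros Hgs.
  assert (Hsp : s < p).
  { assert (s <= p) by (apply Hlub; intros s' [Hs' _]; exact Hs').
    destruct (Req_dec s p) as [->|]; [contradiction | lra]. }
  destruct (nonzero_right_of g s (Hc s) (fun H => False_ind _ (Hgs H))) as [d [Hd Hd']].
  enough (E (Rmin (s + d / 2) p)).
  { apply Hub in H. revert H. apply Rmin_case; lra. }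
  split; [apply Rmin_r|]. intros r Hr.
  assert (Rmin (s + d / 2) p <= s + d / 2) by apply Rmin_l.
  destruct (Rlt_le_dec r s); [apply Hfree; lra|].
  destruct (Req_dec r s) as [->|]; [exact Hgs | apply Hd'; lra].
Qed.

Lemma same_sign_of_nonvanishing (g : R -> R) u v : u <= v ->
  (forall x, u <= x <= v -> continuity_pt g x) ->
  (forall x, u <= x <= v -> g x <> 0) -> 0 < g u * g v.
Proof.
  intros Huv Hc Hn.
  assert (Hu := Hn u ltac:(lra)). assert (Hv := Hn v ltac:(lra)).
  destruct (Rlt_le_dec 0 (g u * g v)) as [|Hle]; [assumption | exfalso].
  destruct (Req_dec u v) as [<-|Hne]; [generalize (Rsqr_pos_lt _ Hu); unfold Rsqr; lra|].
  destruct (Rlt_le_dec (g u) 0) as [Hneg|Hpos].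
  - assert (0 < g v) by (destruct (Rtotal_order (g v) 0) as [|[|]]; nra).
    destruct (Ranalysis5.IVT_interv g u v Hc ltac:(lra) Hneg H) as [z [Hz Hgz]].
    exact (Hn z Hz Hgz).
  - assert (g v < 0) by (destruct (Rtotal_order (g v) 0) as [|[|]]; nra).
    destruct (Ranalysis5.IVT_interv (fun x => - g x) u v) as [z [Hz Hgz]];
      [intros x Hx; now apply continuity_pt_opp, Hc | lra | lra | lra |].
    apply (Hn z Hz). lra.
Qed.

Lemma nonzero_while_receding (g dg : R -> R) t r : t < r ->
  (forall x, t <= x <= r -> is_derive g x (dg x) /\ continuity_pt dg x) ->
  (forall x, t <= x <= r -> dg x <> 0) -> 0 <= g t * dg t -> g r <> 0.
Proof.
  intros Htr Hd Hn Hstart.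
  destruct (MVT_closed g dg t r (Rlt_le _ _ Htr) (fun x Hx => proj1 (Hd x Hx)))
    as [xi [Hxi Heq]].
  assert (Hsame : 0 < dg t * dg xi).
  { apply same_sign_of_nonvanishing; [lra | intros x Hx; apply Hd; lra |].
    intros x Hx; apply Hn; lra. }
  assert (0 < dg t * g r) by nra. intros Hgr. rewrite Hgr in H. lra.
Qed.

Lemma gronwall_vanishing (E dE : R -> R) u v L x0 : u <= x0 <= v ->
  (forall x, u <= x <= v -> is_derive E x (dE x)) ->
  (forall x, u <= x <= v -> 0 <= E x) ->
  (forall x, u <= x <= v -> Rabs (dE x) <= L * E x) ->
  E x0 = 0 -> forall x, u <= x <= v -> E x = 0.
Proof.
  intros Hx0 Hd Hpos Hb HE0 x Hx.
  assert (Hbetween : forall y, u <= y <= v -> - (L * E y) <= dE y <= L * E y)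
    by (intros y Hy; apply Rabs_le_between, Hb, Hy).
  assert (HEx := Hpos x Hx).
  destruct (Rle_lt_dec x0 x) as [Hle|Hlt].
  - assert (H : - (E x0 * exp (- L * (x0 - x0))) <= - (E x * exp (- L * (x - x0)))).
    { apply (nondecreasing_of_derive_nonneg (fun y => - (E y * exp (- L * (y - x0))))
        (fun y => (L * E y - dE y) * exp (- L * (y - x0))) x0 x Hle).
      - intros y Hy. auto_derive; [now exists (dE y); apply Hd; lra|].
        replace (Derive (fun t => E t) y) with (dE y)
          by (symmetry; apply is_derive_unique, Hd; lra).
        unfold Rminus. ring.
      - intros y Hy. apply Rmult_le_pos; [|left; apply exp_pos].
        assert (Hy' := Hbetween y ltac:(lra)). lra. }
    rewrite HE0 in H. assert (0 < exp (- L * (x - x0))) by apply exp_pos. nra.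
  - assert (H : E x * exp (L * (x - x0)) <= E x0 * exp (L * (x0 - x0))).
    { apply (nondecreasing_of_derive_nonneg (fun y => E y * exp (L * (y - x0)))
        (fun y => (L * E y + dE y) * exp (L * (y - x0))) x x0 (Rlt_le _ _ Hlt)).
      - intros y Hy. auto_derive; [now exists (dE y); apply Hd; lra|].
        replace (Derive (fun t => E t) y) with (dE y)
          by (symmetry; apply is_derive_unique, Hd; lra).
        unfold Rminus. ring.
      - intros y Hy. apply Rmult_le_pos; [|left; apply exp_pos].
        assert (Hy' := Hbetween y ltac:(lra)). lra. }
    rewrite HE0 in H. assert (0 < exp (L * (x - x0))) by apply exp_pos. nra.
Qed.

Lemma second_order_vanishing (g dg d2g : R -> R) u v K x0 : 0 <= K -> u <= x0 <= v ->
  (forall x, u <= x <= v -> is_derive g x (dg x) /\ is_derive dg x (d2g x)) ->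
  (forall x, u <= x <= v -> Rabs (d2g x) <= K * (Rabs (g x) + Rabs (dg x))) ->
  g x0 = 0 -> dg x0 = 0 -> forall x, u <= x <= v -> g x = 0.
Proof.
  intros HK Hx0 Hd Hb Hg0 Hdg0 x Hx.
  enough (g x ^ 2 + dg x ^ 2 = 0) by nra.
  apply (gronwall_vanishing (fun y => g y ^ 2 + dg y ^ 2)
           (fun y => 2 * g y * dg y + 2 * dg y * d2g y) u v (1 + 3 * K) x0); auto.
  - intros y Hy. destruct (Hd y Hy) as [H1 H2].
    evar_last; [apply (is_derive_plus (fun t => g t ^ 2) (fun t => dg t ^ 2));
                apply is_derive_pow; eassumption|].
    simpl. unfold plus; simpl. ring.
  - intros y Hy. nra.
  - intros y Hy. specialize (Hb y Hy).
    rewrite <- (pow2_abs (g y)), <- (pow2_abs (dg y)).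
    assert (HA := Rabs_pos (g y)). assert (HB := Rabs_pos (dg y)).
    apply Rle_trans with (2 * Rabs (g y) * Rabs (dg y) + 2 * Rabs (dg y) * Rabs (d2g y)).
    + eapply Rle_trans; [apply Rabs_triang|].
      rewrite !Rabs_mult, (Rabs_right 2) by lra. lra.
    + assert (Rabs (dg y) * Rabs (d2g y) <= Rabs (dg y) * (K * (Rabs (g y) + Rabs (dg y))))
        by (apply Rmult_le_compat_l; lra).
      assert (2 * Rabs (g y) * Rabs (dg y) <= Rabs (g y) ^ 2 + Rabs (dg y) ^ 2)
        by (generalize (pow2_ge_0 (Rabs (g y) - Rabs (dg y))); lra).
      assert (K * (2 * Rabs (g y) * Rabs (dg y)) <= K * (Rabs (g y) ^ 2 + Rabs (dg y) ^ 2))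
        by (apply Rmult_le_compat_l; lra).
      nra.
  - rewrite Hg0, Hdg0. ring.
Qed.

(* [W = g' u - g u'] with [u = sin (m (x - b))] is the Wronskian of [g] against the
   comparison solution of [u'' + m^2 u = 0]. *)
Lemma sturm_root_within_half_period (g dg Q : R -> R) m b : 0 < m ->
  (forall x, b <= x <= b + PI / m -> is_derive g x (dg x) /\ is_derive dg x (- Q x * g x)) ->
  (forall x, b <= x <= b + PI / m -> m ^ 2 <= Q x) ->
  exists z, b <= z <= b + PI / m /\ g z = 0.
Proof.
  intros Hm Hd HQ. apply NNPP. intros Hno.
  assert (Hhalf : 0 < PI / m) by (apply Rdiv_lt_0_compat; [apply PI_RGT_0 | exact Hm]).
  assert (Hsame : forall x, b <= x <= b + PI / m -> 0 < g b * g x).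
  { intros x Hx. apply same_sign_of_nonvanishing; [lra | |].
    - intros y Hy. apply continuity_pt_ex_derive. exists (dg y). apply Hd. lra.
    - intros y Hy Hgy. apply Hno. exists y. split; [lra | exact Hgy]. }
  set (W := fun x => dg x * sin (m * (x - b)) - g x * (m * cos (m * (x - b)))).
  assert (HW : g b * W (b + PI / m) <= g b * W b).
  { apply Ropp_le_cancel.
    apply (nondecreasing_of_derive_nonneg (fun x => - (g b * W x))
      (fun x => g b * g x * (Q x - m ^ 2) * sin (m * (x - b))) b (b + PI / m)); [lra| |].
    - intros x Hx. destruct (Hd x Hx) as [H1 H2]. unfold W.
      auto_derive; [repeat split; eexists; eassumption|].
      replace (Derive (fun t => g t) x) with (dg x) by (symmetry; now apply is_derive_unique).
      replace (Derive (fun t => dg t) x) with (- Q x * g x)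
        by (symmetry; now apply is_derive_unique).
      unfold Rminus. ring.
    - intros x Hx. specialize (Hsame x Hx). specialize (HQ x Hx).
      apply Rmult_le_pos; [apply Rmult_le_pos; lra|].
      apply sin_ge_0; [nra|].
      replace PI with (m * (PI / m)) by (field; lra). apply Rmult_le_compat_l; lra. }
  unfold W in HW. replace (b - b) with 0 in HW by ring.
  replace (m * (b + PI / m - b)) with PI in HW by (field; lra).
  rewrite Rmult_0_r, sin_0, cos_0, sin_PI, cos_PI in HW.
  assert (0 < g b * g (b + PI / m)) by (apply Hsame; lra).
  assert (0 < g b * g b) by (apply Hsame; lra).
  nra.
Qed.

Lemma interlaced_cover (xs ys : nat -> R) x K :
  (forall k, ys k < xs k < ys (S k)) -> ys 0%nat <= x -> x < ys K ->
  exists k, ys k <= x < xs k \/ xs k <= x < ys (S k).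
Proof.
  intros Hint H0. induction K as [|K IH]; intros HK; [lra|].
  destruct (Rlt_le_dec x (ys K)) as [Hlt|Hge]; [now apply IH|].
  exists K. destruct (Rlt_le_dec x (xs K)); [left | right]; lra.
Qed.

Lemma Un_cv_zero_seq (u : nat -> R) l : Un_cv u l -> (forall k, u k = 0) -> l = 0.
Proof.
  intros Hu H0. apply NNPP. intros Hl.
  destruct (Hu (Rabs l)) as [N HN]; [now apply Rabs_pos_lt|].
  specialize (HN N (le_n N)). unfold R_dist in HN.
  rewrite H0, Rminus_0_l, Rabs_Ropp in HN. lra.
Qed.

Lemma interlaced_unbounded (g h : R -> R) (xs ys : nat -> R) :
  (forall x, continuity_pt g x) -> (forall x, continuity_pt h x) ->
  (forall k, ys k < xs k < ys (S k)) ->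
  (forall k, g (xs k) = 0) -> (forall k, h (ys k) = 0) ->
  (forall l, ys 0%nat < l -> ~ (g l = 0 /\ h l = 0)) ->
  forall B, exists k, B < ys k.
Proof.
  intros Hg Hh Hint Hgx Hhy Hsimple B. apply NNPP. intros Hno.
  assert (Hgrow : Un_growing ys) by (intros k; destruct (Hint k); lra).
  destruct (growing_cv ys Hgrow) as [l Hl].
  { exists B. intros y [k ->]. apply Rnot_lt_le. intros H. apply Hno. now exists k. }
  assert (Hxl : Un_cv xs l).
  { intros eps Heps. destruct (Hl eps Heps) as [N HN]. exists N. intros k Hk.
    assert (H1 := HN k Hk). assert (H2 := HN (S k) ltac:(lia)). destruct (Hint k).
    unfold R_dist in *. apply Rabs_def2 in H1, H2. apply Rabs_def1; lra. }
  apply (Hsimple l).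
  - generalize (growing_ineq ys l Hgrow Hl 1%nat) (Hint 0%nat). lra.
  - split.
    + apply (Un_cv_zero_seq (fun k => g (xs k))); [now apply continuity_seq | exact Hgx].
    + apply (Un_cv_zero_seq (fun k => h (ys k))); [now apply continuity_seq | exact Hhy].
Qed.

(** * The prolate spheroidal equation *)

Section SpheroidalEquation.

Variables (c chi : R) (f : R -> R).
Hypothesis c_pos : 0 < c.
Hypothesis c2_lt_chi : c ^ 2 < chi.
Hypothesis f_derivable : forall x, ex_derive f x /\ ex_derive (Derive f) x.
Hypothesis f_ode : forall x,
  (1 - x ^ 2) * Derive (Derive f) x - 2 * x * Derive f x + (chi - c ^ 2 * x ^ 2) * f x = 0.
Hypothesis f_nontrivial : exists x, -1 < x < 1 /\ f x <> 0.

Local Notation turning := (sqrt chi / c).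

Lemma is_derive_f x : is_derive f x (Derive f x).
Proof. apply Derive_correct, f_derivable. Qed.

Lemma is_derive_df x : is_derive (Derive f) x (Derive (Derive f) x).
Proof. apply Derive_correct, f_derivable. Qed.

Lemma continuity_pt_f x : continuity_pt f x.
Proof. apply continuity_pt_ex_derive, f_derivable. Qed.

Lemma continuity_pt_df x : continuity_pt (Derive f) x.
Proof. apply continuity_pt_ex_derive, f_derivable. Qed.

Lemma is_derive_flux x :
  is_derive (fun t => (t ^ 2 - 1) * Derive f t) x ((chi - c ^ 2 * x ^ 2) * f x).
Proof.
  auto_derive; [apply f_derivable|]. change (fun t => Derive f t) with (Derive f).
  generalize (f_ode x). lra.
Qed.

Lemma turning_gt_1 : 1 < turning.
Proof.
  assert (Hc : c < sqrt chi).
  { rewrite <- (sqrt_pow2 c) by lra. apply sqrt_lt_1_alt. split; nra. }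
  apply (Rmult_lt_reg_r c); [lra|]. unfold Rdiv. rewrite Rmult_assoc, Rinv_l by lra. lra.
Qed.

Lemma chi_eq_turning : c ^ 2 * turning ^ 2 = chi.
Proof.
  replace (turning ^ 2) with (sqrt chi * sqrt chi / (c * c)) by (field; lra).
  rewrite sqrt_sqrt by nra. field. lra.
Qed.

Lemma chi_gt_below_turning x : 0 <= x < turning -> c ^ 2 * x ^ 2 < chi.
Proof.
  intros Hx. rewrite <- chi_eq_turning.
  apply Rmult_lt_compat_l; nra.
Qed.

Lemma chi_lt_beyond_turning x : turning < x -> chi < c ^ 2 * x ^ 2.
Proof.
  intros Hx. rewrite <- chi_eq_turning. assert (H1 := turning_gt_1).
  apply Rmult_lt_compat_l; nra.
Qed.

Lemma second_derivative_bound x m B : 0 < m -> m <= Rabs (1 - x ^ 2) -> Rabs x <= B ->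
  Rabs (Derive (Derive f) x) <=
    (2 * B + Rabs chi + c ^ 2 * B ^ 2) / m * (Rabs (f x) + Rabs (Derive f x)).
Proof.
  intros Hm Hmx HB.
  assert (Hchi : Rabs (chi - c ^ 2 * x ^ 2) <= Rabs chi + c ^ 2 * B ^ 2).
  { assert (x ^ 2 <= B ^ 2)
      by (rewrite <- (pow2_abs x); apply pow_incr; split; [apply Rabs_pos | exact HB]).
    apply Rabs_le. generalize (Rle_abs chi) (Rabs_pos chi) (Rabs_maj2 chi). split; nra. }
  assert (Hmain : Rabs (1 - x ^ 2) * Rabs (Derive (Derive f) x) <=
                  (2 * B + Rabs chi + c ^ 2 * B ^ 2) * (Rabs (f x) + Rabs (Derive f x))).
  { rewrite <- Rabs_mult.
    replace ((1 - x ^ 2) * Derive (Derive f) x)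
      with (2 * x * Derive f x - (chi - c ^ 2 * x ^ 2) * f x) by (generalize (f_ode x); lra).
    eapply Rle_trans; [apply Rabs_triang|].
    rewrite Rabs_Ropp, !Rabs_mult, (Rabs_right 2) by lra.
    assert (HA := Rabs_pos (f x)). assert (HD := Rabs_pos (Derive f x)).
    assert (Rabs x * Rabs (Derive f x) <= B * Rabs (Derive f x))
      by (apply Rmult_le_compat_r; lra).
    assert (Rabs (chi - c ^ 2 * x ^ 2) * Rabs (f x) <= (Rabs chi + c ^ 2 * B ^ 2) * Rabs (f x))
      by (apply Rmult_le_compat_r; lra).
    generalize (Rabs_pos chi) (Rabs_pos x) (pow2_ge_0 c) (pow2_ge_0 B). nra. }
  apply (Rmult_le_reg_l m); [exact Hm|].
  replace (m * ((2 * B + Rabs chi + c ^ 2 * B ^ 2) / m * (Rabs (f x) + Rabs (Derive f x))))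
    with ((2 * B + Rabs chi + c ^ 2 * B ^ 2) * (Rabs (f x) + Rabs (Derive f x)))
    by (field; lra).
  eapply Rle_trans; [|exact Hmain].
  apply Rmult_le_compat_r; [apply Rabs_pos | exact Hmx].
Qed.

Lemma vanishing_of_double_zero u v m x0 : 0 < m ->
  (forall x, u <= x <= v -> m <= Rabs (1 - x ^ 2)) -> u <= x0 <= v ->
  f x0 = 0 -> Derive f x0 = 0 -> forall x, u <= x <= v -> f x = 0.
Proof.
  intros Hm Hsing Hx0 Hf0 Hd0.
  set (B := Rabs u + Rabs v).
  assert (HB : forall x, u <= x <= v -> Rabs x <= B).
  { intros x Hx. unfold B. apply Rabs_le.
    generalize (Rle_abs u) (Rle_abs v) (Rabs_maj2 u) (Rabs_maj2 v). lra. }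
  apply (second_order_vanishing f (Derive f) (Derive (Derive f)) u v
           ((2 * B + Rabs chi + c ^ 2 * B ^ 2) / m) x0); auto.
  - apply Rdiv_le_0_compat; [|exact Hm].
    assert (0 <= B) by (unfold B; generalize (Rabs_pos u) (Rabs_pos v); lra).
    generalize (Rabs_pos chi) (pow2_ge_0 c) (pow2_ge_0 B). nra.
  - intros x _. split; [apply is_derive_f | apply is_derive_df].
  - intros x Hx. now apply second_derivative_bound; [| apply Hsing | apply HB].
Qed.

Lemma no_double_zero_inside x0 : -1 < x0 < 1 -> f x0 = 0 -> Derive f x0 = 0 -> False.
Proof.
  intros Hx0 Hf0 Hd0. destruct f_nontrivial as [x [Hx Hfx]]. apply Hfx.
  set (u := Rmin x x0). set (v := Rmax x x0).
  assert (Hu : -1 < u <= x) by (unfold u; split; [apply Rmin_case | apply Rmin_l]; lra).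
  assert (Hv : x <= v < 1) by (unfold v; split; [apply Rmax_l | apply Rmax_case]; lra).
  apply (vanishing_of_double_zero u v ((1 - v) * (1 + u)) x0); try nra.
  - intros y Hy. rewrite Rabs_right; nra.
  - split; [apply Rmin_r | apply Rmax_r].
Qed.

(* The flux [(x^2 - 1) f'] vanishes at the singular point [1], so a bound on [f] near [1]
   transfers to [f']. *)
Lemma df_bound_near_one M t : 0 <= t < 1 ->
  (forall s, t <= s <= 1 -> Rabs (f s) <= M * (1 - s)) ->
  Rabs (Derive f t) <= (Rabs chi + c ^ 2) * M * (1 - t).
Proof.
  intros Ht Hf.
  assert (HM : 0 <= M) by (generalize (Hf t ltac:(lra)) (Rabs_pos (f t)); nra).
  assert (Hflux : Rabs ((1 ^ 2 - 1) * Derive f 1 - (t ^ 2 - 1) * Derive f t)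
                  <= (Rabs chi + c ^ 2) * (M * (1 - t)) * (1 - t)).
  { apply (Rabs_sub_le_of_derive_bound (fun t => (t ^ 2 - 1) * Derive f t)
             (fun s => (chi - c ^ 2 * s ^ 2) * f s)); [lra | intros; apply is_derive_flux |].
    intros s Hs. rewrite Rabs_mult.
    apply Rmult_le_compat; try apply Rabs_pos.
    - assert (0 <= s ^ 2 <= 1) by nra. apply Rabs_le.
      generalize (Rle_abs chi) (Rabs_maj2 chi) (pow2_ge_0 c). split; nra.
    - apply Rle_trans with (M * (1 - s)); [apply Hf; lra | apply Rmult_le_compat_l; lra]. }
  replace ((1 ^ 2 - 1) * Derive f 1 - (t ^ 2 - 1) * Derive f t)
    with ((1 - t) * ((1 + t) * Derive f t)) in Hflux by ring.
  rewrite !Rabs_mult, (Rabs_right (1 - t)), (Rabs_right (1 + t)) in Hflux by lra.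
  assert (HDt := Rabs_pos (Derive f t)).
  assert ((1 + t) * Rabs (Derive f t) <= (Rabs chi + c ^ 2) * M * (1 - t))
    by (apply (Rmult_le_reg_l (1 - t)); [lra | nra]).
  nra.
Qed.

(* Near the singular point [1] the Gronwall argument is replaced by a bootstrap: with
   [M = max |f'|] on [[1 - d, 1]], the bound [|f s| <= M (1 - s)] gives back [M <= M / 2]. *)
Lemma zero_at_one_spreads_left : f 1 = 0 ->
  exists t, -1 < t < 1 /\ f t = 0 /\ Derive f t = 0.
Proof.
  intros Hf1.
  set (K := Rabs chi + c ^ 2).
  assert (HK : 0 <= K) by (unfold K; generalize (Rabs_pos chi); nra).
  set (d := / (2 * K + 2)).
  assert (Hd : 0 < d <= 1 / 2).
  { unfold d. split; [apply Rinv_0_lt_compat; lra|].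
    apply (Rmult_le_reg_l (2 * K + 2)); [lra|]. rewrite Rinv_r; lra. }
  assert (HKd : K * d <= 1 / 2).
  { unfold d. apply (Rmult_le_reg_l (2 * K + 2)); [lra|].
    replace ((2 * K + 2) * (K * / (2 * K + 2))) with K by (field; lra). lra. }
  destruct (continuity_ab_maj (fun t => Rabs (Derive f t)) (1 - d) 1) as [tM [HM HtM]];
    [lra | intros t _; apply (continuity_pt_comp (Derive f) Rabs);
           [apply continuity_pt_df | apply Rcontinuity_abs] |].
  set (M := Rabs (Derive f tM)) in HM.
  assert (HM0 : 0 <= M) by apply Rabs_pos.
  assert (Hf : forall s, 1 - d <= s <= 1 -> Rabs (f s) <= M * (1 - s)).
  { intros s Hs. rewrite <- Rabs_Ropp, <- Rminus_0_l, <- Hf1.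
    apply (Rabs_sub_le_of_derive_bound f (Derive f)); [lra | intros; apply is_derive_f |].
    intros x Hx. apply HM. lra. }
  assert (Hdf : forall t, 1 - d <= t <= 1 -> Rabs (Derive f t) <= M / 2).
  { intros t Ht. destruct (Req_dec t 1) as [->|Ht1].
    { assert (Hd1 : Derive f 1 = 0) by (generalize (f_ode 1); rewrite Hf1; lra).
      rewrite Hd1, Rabs_R0. lra. }
    assert (H := df_bound_near_one M t ltac:(lra) (fun s Hs => Hf s ltac:(lra))).
    fold K in H. assert (K * M * (1 - t) <= K * M * d) by (apply Rmult_le_compat_l; nra).
    nra. }
  assert (HMz : M = 0) by (assert (M <= M / 2) by (apply Hdf; lra); lra).
  exists (1 - d / 2). split; [lra|]. split; apply Rabs_eq_0.
  - assert (H := Hf (1 - d / 2) ltac:(lra)). rewrite HMz in H.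
    generalize (Rabs_pos (f (1 - d / 2))). lra.
  - assert (H := Hdf (1 - d / 2) ltac:(lra)). rewrite HMz in H.
    generalize (Rabs_pos (Derive f (1 - d / 2))). lra.
Qed.

Lemma f_one_neq0 : f 1 <> 0.
Proof.
  intros Hf1. destruct (zero_at_one_spreads_left Hf1) as [t [Ht [Hft Hdt]]].
  exact (no_double_zero_inside t Ht Hft Hdt).
Qed.

Lemma no_double_zero_beyond_one x0 : 1 < x0 -> f x0 = 0 -> Derive f x0 = 0 -> False.
Proof.
  intros Hx0 Hf0 Hd0. apply f_one_neq0, (continuity_pt_zero_right f 1 (continuity_pt_f 1)).
  intros x Hx. set (u := Rmin x x0).
  assert (Hu : 1 < u) by (unfold u; apply Rmin_case; lra).
  apply (vanishing_of_double_zero u (Rmax x x0) (u ^ 2 - 1) x0); try nra.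
  - intros y Hy. rewrite Rabs_left1; nra.
  - split; [apply Rmin_r | apply Rmax_r].
  - split; [apply Rmin_l | apply Rmax_l].
Qed.

Lemma f_df_pos_below_turning x : 1 < x <= turning -> 0 < f x * Derive f x.
Proof.
  intros Hx.
  set (H := fun t => f t * ((t ^ 2 - 1) * Derive f t)).
  set (dH := fun t =>
    Derive f t * ((t ^ 2 - 1) * Derive f t) + f t * ((chi - c ^ 2 * t ^ 2) * f t)).
  assert (HdH : forall t, is_derive H t (dH t)).
  { intros t. apply (is_derive_mult f (fun t => (t ^ 2 - 1) * Derive f t));
      [apply is_derive_f | apply is_derive_flux | intros; apply Rmult_comm]. }
  set (mid := (1 + x) / 2).
  assert (Hstart : H 1 < H mid).
  { apply (increasing_of_derive_pos H dH); [unfold mid; lra | intros; apply HdH |].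
    intros t Ht. assert (Hchi := chi_gt_below_turning t ltac:(unfold mid in Ht; lra)).
    unfold dH. assert (0 <= t ^ 2 - 1) by nra.
    destruct (Req_dec (f t) 0) as [Hft|Hft].
    - destruct (Rle_lt_or_eq_dec 1 t (proj1 Ht)) as [Ht1 | <-]; [|now exfalso; apply f_one_neq0].
      assert (Hdt : Derive f t <> 0)
        by (intros Hd; exact (no_double_zero_beyond_one t Ht1 Hft Hd)).
      rewrite Hft. generalize (Rsqr_pos_lt _ Hdt). unfold Rsqr.
      assert (0 < t ^ 2 - 1) by nra. nra.
    - generalize (Rsqr_pos_lt _ Hft) (pow2_ge_0 (Derive f t)). unfold Rsqr. nra. }
  assert (Hrest : H mid <= H x).
  { apply (nondecreasing_of_derive_nonneg H dH); [unfold mid; lra | intros; apply HdH |].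
    intros t Ht. assert (c ^ 2 * t ^ 2 <= chi).
    { destruct (Req_dec t turning) as [->|]; [rewrite chi_eq_turning; lra|].
      left. apply chi_gt_below_turning. unfold mid in Ht. lra. }
    assert (0 <= t ^ 2 - 1) by (unfold mid in Ht; nra).
    unfold dH. generalize (pow2_ge_0 (Derive f t)) (pow2_ge_0 (f t)). nra. }
  unfold H in Hstart, Hrest. rewrite pow1, Rminus_eq_0 in Hstart.
  apply (Rmult_lt_reg_l (x ^ 2 - 1)); [nra|]. rewrite Rmult_0_r. nra.
Qed.

Lemma crit_beyond_turning y : 1 < y -> Derive f y = 0 -> turning < y.
Proof.
  intros Hy Hd. apply Rnot_le_lt. intros Hle.
  generalize (f_df_pos_below_turning y (conj Hy Hle)). rewrite Hd. lra.
Qed.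

Lemma riccati_decreasing u v : turning < u < v -> (forall x, u <= x <= v -> f x <> 0) ->
  (v ^ 2 - 1) * Derive f v / f v < (u ^ 2 - 1) * Derive f u / f u.
Proof.
  intros Huv Hnz. assert (H1 := turning_gt_1).
  apply Ropp_lt_cancel.
  apply (increasing_of_derive_pos (fun t => - ((t ^ 2 - 1) * Derive f t / f t))
    (fun t => - (((chi - c ^ 2 * t ^ 2) * f t * f t - (t ^ 2 - 1) * Derive f t * Derive f t)
                 / f t ^ 2))); [lra | |].
  - intros t Ht. apply (is_derive_opp (fun t => (t ^ 2 - 1) * Derive f t / f t)).
    apply (is_derive_div (fun t => (t ^ 2 - 1) * Derive f t) f);
      [apply is_derive_flux | apply is_derive_f | apply Hnz, Ht].
  - intros t Ht. assert (Hchi := chi_lt_beyond_turning t ltac:(lra)).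
    assert (Hf2 : 0 < f t ^ 2) by (generalize (Rsqr_pos_lt _ (Hnz t Ht)); unfold Rsqr; nra).
    assert ((chi - c ^ 2 * t ^ 2) * f t * f t - (t ^ 2 - 1) * Derive f t * Derive f t < 0)
      by (assert (0 < (c ^ 2 * t ^ 2 - chi) * (f t * f t)) by (apply Rmult_lt_0_compat; nra);
          assert (0 <= (t ^ 2 - 1) * (Derive f t * Derive f t)) by (apply Rmult_le_pos; nra);
          nra).
    assert (0 < / f t ^ 2) by (apply Rinv_0_lt_compat; exact Hf2).
    unfold Rdiv. nra.
Qed.

Lemma no_crit_before_next_zero y x : 1 < y -> Derive f y = 0 ->
  (forall r, y < r < x -> f r <> 0) -> forall r, y < r < x -> Derive f r <> 0.
Proof.
  intros Hy Hdy Hnz r Hr Hdr.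
  assert (Hturn := crit_beyond_turning y Hy Hdy).
  assert (Hfy : f y <> 0) by (intros H; exact (no_double_zero_beyond_one y Hy H Hdy)).
  assert (H := riccati_decreasing y r ltac:(lra)).
  rewrite Hdy, Hdr, !Rmult_0_r, !Rdiv_0_l in H.
  apply (Rlt_irrefl 0), H. intros t Ht.
  destruct (Req_dec t y) as [->|]; [exact Hfy | apply Hnz; lra].
Qed.

(* Liouville normal form: [g = sqrt (x^2 - 1) f] solves [g'' = - Q g] on [(1, oo)]. *)
Lemma liouville_normal_form x : 1 < x ->
  is_derive (fun t => sqrt (t ^ 2 - 1) * f t) x
    (x / sqrt (x ^ 2 - 1) * f x + sqrt (x ^ 2 - 1) * Derive f x) /\
  is_derive (fun t => t / sqrt (t ^ 2 - 1) * f t + sqrt (t ^ 2 - 1) * Derive f t) x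
    (- ((c ^ 2 * x ^ 2 - chi + / (x ^ 2 - 1)) / (x ^ 2 - 1)) * (sqrt (x ^ 2 - 1) * f x)).
Proof.
  intros Hx. assert (Hp : 0 < x ^ 2 - 1) by nra.
  assert (Hr : 0 < sqrt (x ^ 2 - 1)) by (apply sqrt_lt_R0; lra).
  assert (Hrr : sqrt (x ^ 2 - 1) * sqrt (x ^ 2 - 1) = x ^ 2 - 1) by (apply sqrt_sqrt; lra).
  destruct (f_derivable x) as [Hf Hdf].
  split; auto_derive;
    try (replace (x * (x * 1) + - (1)) with (x ^ 2 - 1) by ring;
         repeat split; auto; apply Rgt_not_eq; lra);
    change (fun t => f t) with f; change (fun t => Derive f t) with (Derive f);
    replace (x * (x * 1) + - (1)) with (x ^ 2 - 1) by ring;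
    assert (Hode := f_ode x);
    set (r := sqrt (x ^ 2 - 1)) in *; set (d2 := Derive (Derive f) x) in *.
  - field. lra.
  - replace d2 with ((2 * x * Derive f x - (chi - c ^ 2 * x ^ 2) * f x) / (1 - x ^ 2))
      by (field_simplify_eq; lra).
    field_simplify_eq; [|lra].
    replace (r ^ 4) with ((x ^ 2 - 1) ^ 2) by (rewrite <- Hrr; ring).
    replace (r ^ 2) with (x ^ 2 - 1) by (rewrite <- Hrr; ring).
    ring.
Qed.

Lemma zeros_unbounded T : exists z, T < z /\ f z = 0.
Proof.
  assert (H1 := turning_gt_1). set (b := Rmax T (2 * turning) + 1).
  assert (HbT : T < b) by (unfold b; generalize (Rmax_l T (2 * turning)); lra).
  assert (Hb2 : 2 * turning < b) by (unfold b; generalize (Rmax_r T (2 * turning)); lra).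
  assert (Hhalf : 0 < PI / (c / 2)) by (apply Rdiv_lt_0_compat; [apply PI_RGT_0 | lra]).
  destruct (sturm_root_within_half_period (fun t => sqrt (t ^ 2 - 1) * f t)
    (fun t => t / sqrt (t ^ 2 - 1) * f t + sqrt (t ^ 2 - 1) * Derive f t)
    (fun t => (c ^ 2 * t ^ 2 - chi + / (t ^ 2 - 1)) / (t ^ 2 - 1)) (c / 2) b)
    as [z [Hz Hgz]]; [lra | intros x Hx; apply liouville_normal_form; lra | |].
  - intros x Hx. assert (Hx2 : 2 * turning < x) by lra.
    assert (Hp : 0 < x ^ 2 - 1) by nra.
    assert (Hchi : 4 * chi <= c ^ 2 * x ^ 2).
    { rewrite <- chi_eq_turning.
      replace (4 * (c ^ 2 * turning ^ 2)) with (c ^ 2 * (4 * turning ^ 2)) by ring.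
      apply Rmult_le_compat_l; nra. }
    apply (Rmult_le_reg_r (x ^ 2 - 1)); [exact Hp|].
    unfold Rdiv. rewrite Rmult_assoc, Rinv_l, Rmult_1_r by lra.
    assert (0 < / (x ^ 2 - 1)) by (apply Rinv_0_lt_compat; exact Hp). nra.
  - exists z. split; [lra|].
    assert (0 < sqrt (z ^ 2 - 1)) by (apply sqrt_lt_R0; nra).
    apply (Rmult_eq_reg_l (sqrt (z ^ 2 - 1))); [rewrite Rmult_0_r; exact Hgz | lra].
Qed.

Lemma critical_points_unbounded T : exists p, T < p /\ Derive f p = 0.
Proof.
  destruct (zeros_unbounded T) as [z1 [Hz1 Hf1]].
  destruct (zeros_unbounded z1) as [z2 [Hz2 Hf2]].
  destruct (MVT_closed f (Derive f) z1 z2) as [p [Hp Heq]];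
    [lra | intros; apply is_derive_f |].
  rewrite Hf1, Hf2, Rminus_0_r in Heq.
  exists p. split; [lra|].
  apply (Rmult_eq_reg_r (z2 - z1)); [lra|]. lra.
Qed.

Lemma next_zero t : 1 < t -> exists s, t < s /\ f s = 0 /\ forall r, t < r < s -> f r <> 0.
Proof.
  intros Ht. destruct (zeros_unbounded t) as [p [Hp Hfp]].
  apply (first_root_after f t p continuity_pt_f Hp Hfp).
  apply nonzero_right_of; [apply continuity_pt_f|]. intros Hft.
  exists (Derive f t). split; [apply is_derive_f|].
  intros Hdt. exact (no_double_zero_beyond_one t Ht Hft Hdt).
Qed.

Lemma next_critical_point t : 1 < t ->
  exists s, t < s /\ Derive f s = 0 /\ forall r, t < r < s -> Derive f r <> 0.
Proof.
  intros Ht. destruct (critical_points_unbounded t) as [p [Hp Hdp]].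
  apply (first_root_after (Derive f) t p continuity_pt_df Hp Hdp).
  apply nonzero_right_of; [apply continuity_pt_df|]. intros Hdt.
  exists (Derive (Derive f) t). split; [apply is_derive_df|]. intros Hd2.
  assert (Hchi := chi_lt_beyond_turning t (crit_beyond_turning t Ht Hdt)).
  assert (Hft : f t <> 0) by (intros Hft; exact (no_double_zero_beyond_one t Ht Hft Hdt)).
  generalize (f_ode t). rewrite Hd2, Hdt. intros Hode.
  apply Hft, (Rmult_eq_reg_l (chi - c ^ 2 * t ^ 2)); lra.
Qed.

Lemma interlaced_zeros_and_critical_points : exists xs ys : nat -> R,
  (forall k, turning < ys k) /\ (forall k, ys k < xs k < ys (S k)) /\
  (forall k, f (xs k) = 0) /\ (forall k, Derive f (ys k) = 0) /\
  (forall r, turning < r < ys 0%nat -> Derive f r <> 0) /\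
  (forall k r, ys k < r < xs k -> f r <> 0) /\
  (forall k r, xs k < r < ys (S k) -> Derive f r <> 0).
Proof.
  assert (H1 := turning_gt_1).
  destruct (choice (fun t s => 1 < t -> t < s /\ f s = 0 /\ forall r, t < r < s -> f r <> 0))
    as [nz Hnz].
  { intros t. destruct (Rlt_le_dec 1 t) as [Ht|Ht].
    - destruct (next_zero t Ht) as [s Hs]. now exists s.
    - exists t. lra. }
  destruct (choice (fun t s => 1 < t ->
      t < s /\ Derive f s = 0 /\ forall r, t < r < s -> Derive f r <> 0)) as [nc Hnc].
  { intros t. destruct (Rlt_le_dec 1 t) as [Ht|Ht].
    - destruct (next_critical_point t Ht) as [s Hs]. now exists s.
    - exists t. lra. }
  set (ys := fix ys k := match k with O => nc turning | S k => nc (nz (ys k)) end).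
  set (xs := fun k => nz (ys k)).
  assert (Hys : forall k, turning < ys k).
  { induction k as [|k IH]; simpl.
    - apply Hnc. exact H1.
    - destruct (Hnz (ys k)) as [Hx _]; [lra|].
      destruct (Hnc (nz (ys k))) as [Hy _]; lra. }
  assert (Hxs : forall k, ys k < xs k /\ f (xs k) = 0 /\ forall r, ys k < r < xs k -> f r <> 0)
    by (intros k; apply Hnz; generalize (Hys k); lra).
  assert (Hys' : forall k, xs k < ys (S k) /\ Derive f (ys (S k)) = 0 /\
                           forall r, xs k < r < ys (S k) -> Derive f r <> 0)
    by (intros k; apply Hnc; generalize (Hys k) (proj1 (Hxs k)); lra).
  assert (Hy0 := Hnc turning H1).
  exists xs, ys. repeat split.
  - apply Hys.
  - apply Hxs.
  - apply Hys'.
  - apply Hxs.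
  - intros [|k]; [apply Hy0 | apply Hys'].
  - apply Hy0.
  - apply Hxs.
  - apply Hys'.
Qed.

Lemma f_nonzero_while_receding t r : t < r ->
  (forall s, t <= s <= r -> Derive f s <> 0) -> 0 <= f t * Derive f t -> f r <> 0.
Proof.
  intros Htr Hd Hstart. apply (nonzero_while_receding f (Derive f) t r Htr); auto.
  intros x _. split; [apply is_derive_f | apply continuity_pt_df].
Qed.

Section Enumeration.

Variables xs ys : nat -> R.
Hypothesis ys_beyond_turning : forall k, turning < ys k.
Hypothesis interlaced : forall k, ys k < xs k < ys (S k).
Hypothesis f_xs : forall k, f (xs k) = 0.
Hypothesis df_ys : forall k, Derive f (ys k) = 0.
Hypothesis df_before_ys0 : forall r, turning < r < ys 0%nat -> Derive f r <> 0.
Hypothesis f_after_ys : forall k r, ys k < r < xs k -> f r <> 0.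
Hypothesis df_after_xs : forall k r, xs k < r < ys (S k) -> Derive f r <> 0.

Lemma ys_unbounded B : exists k, B < ys k.
Proof.
  apply (interlaced_unbounded f (Derive f) xs ys continuity_pt_f continuity_pt_df
           interlaced f_xs df_ys).
  intros l Hl [Hfl Hdl]. apply (no_double_zero_beyond_one l); auto.
  generalize turning_gt_1 (ys_beyond_turning 0). lra.
Qed.

Lemma roots_enumerated x : 1 < x ->
  (f x = 0 -> exists k, x = xs k) /\ (Derive f x = 0 -> exists k, x = ys k).
Proof.
  intros Hx. assert (Hturn := turning_gt_1).
  assert (Hsimple : forall y, 1 < y -> f y = 0 -> Derive f y <> 0)
    by (intros y Hy Hf Hd; exact (no_double_zero_beyond_one y Hy Hf Hd)).
  destruct (Rle_lt_dec x turning) as [Hle|Hgt].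
  { assert (Hpos := f_df_pos_below_turning x (conj Hx Hle)).
    split; intros H; rewrite H in Hpos; lra. }
  destruct (Rlt_le_dec x (ys 0%nat)) as [Hlt|Hge].
  { split; intros H; exfalso; [|exact (df_before_ys0 x (conj Hgt Hlt) H)].
    apply (f_nonzero_while_receding turning x Hgt); auto;
      [|left; apply f_df_pos_below_turning; lra].
    intros s Hs. destruct (Req_dec s turning) as [->|]; [|apply df_before_ys0; lra].
    intros Hd. generalize (f_df_pos_below_turning turning (conj Hturn (Rle_refl _))).
    rewrite Hd. lra. }
  destruct (ys_unbounded x) as [K HK].
  destruct (interlaced_cover xs ys x K interlaced Hge HK) as [k [[Hk1 Hk2]|[Hk1 Hk2]]].
  - assert (Hyk := ys_beyond_turning k).
    destruct (Req_dec x (ys k)) as [->|Hne].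
    + split; intros H; [exfalso; exact (Hsimple (ys k) Hx H (df_ys k)) | now exists k].
    + assert (Hr : ys k < x < xs k) by lra.
      split; intros H; exfalso; [exact (f_after_ys k x Hr H)|].
      exact (no_crit_before_next_zero (ys k) (xs k) ltac:(lra) (df_ys k) (f_after_ys k)
               x Hr H).
  - destruct (Req_dec x (xs k)) as [->|Hne].
    + split; intros H; [now exists k | exfalso; exact (Hsimple (xs k) Hx (f_xs k) H)].
    + assert (Hr : xs k < x < ys (S k)) by lra.
      split; intros H; exfalso; [|exact (df_after_xs k x Hr H)].
      apply (f_nonzero_while_receding (xs k) x); [lra | | rewrite f_xs; lra | exact H].
      intros s Hs. destruct (Req_dec s (xs k)) as [->|]; [|apply (df_after_xs k); lra].
      apply Hsimple; [generalize (ys_beyond_turning k) (interlaced k); lra | apply f_xs].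
Qed.

End Enumeration.

Lemma spheroidal_roots_interlace : 1 < turning /\ exists xs ys : nat -> R,
  (forall x, 1 < x -> (f x = 0 <-> exists k, x = xs k)) /\ (forall k, 1 < xs k) /\
  (forall y, 1 < y -> (Derive f y = 0 <-> exists k, y = ys k)) /\ (forall k, 1 < ys k) /\
  turning < ys 0%nat /\ (forall k, ys k < xs k < ys (S k)).
Proof.
  assert (Hturn := turning_gt_1). split; [exact Hturn|].
  destruct interlaced_zeros_and_critical_points
    as [xs [ys [Hys [Hint [Hfx [Hdy [Hd0 [Hfa Hda]]]]]]]].
  assert (Hroots := roots_enumerated xs ys Hys Hint Hfx Hdy Hd0 Hfa Hda).
  exists xs, ys. split; [|split; [|split; [|split; [|split]]]].
  - intros x Hx. split; [apply Hroots, Hx | intros [k ->]; apply Hfx].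
  - intros k. generalize (Hys k) (Hint k). lra.
  - intros y Hy. split; [apply Hroots, Hy | intros [k ->]; apply Hdy].
  - intros k. generalize (Hys k). lra.
  - apply Hys.
  - apply Hint.
Qed.

End SpheroidalEquation.

Lemma nonvanishing_of_unit_norm (g : R -> R) :
  is_RInt (fun t => g t ^ 2) (-1) 1 1 -> exists x, -1 < x < 1 /\ g x <> 0.
Proof.
  intros Hnorm. apply NNPP. intros Hno.
  assert (H0 : is_RInt (fun _ => 0) (-1) 1 1).
  { apply (is_RInt_ext (fun t => g t ^ 2)); [|exact Hnorm].
    intros x Hx. rewrite Rmin_left, Rmax_right in Hx by lra.
    assert (Hgx : g x = 0) by (apply NNPP; intros Hgx; apply Hno; now exists x).
    rewrite Hgx. change ((0 : R) ^ 2 = 0). ring. }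
  assert (H1 := is_RInt_const (-1) 1 0).
  apply (is_RInt_unique (V := R_CompleteNormedModule)) in H0, H1.
  rewrite H0 in H1. unfold scal in H1. simpl in H1. unfold mult in H1. simpl in H1. lra.
Qed.

Theorem theorem29 (c : R) (psi : nat -> R -> R) (lam : nat -> C)
    (chi : nat -> R) (n : nat) :
  0 < c -> pswf_system c psi lam chi -> c ^ 2 < chi n ->
  1 < sqrt (chi n) / c /\
  exists xs ys : nat -> R,
    (* xs enumerates the roots of psi_n in (1, oo) *)
    (forall x, 1 < x -> (psi n x = 0 <-> exists k, x = xs k)) /\
    (forall k, 1 < xs k) /\
    (* ys enumerates the roots of psi_n' in (1, oo) *)
    (forall y, 1 < y -> (Derive (psi n) y = 0 <-> exists k, y = ys k)) /\
    (forall k, 1 < ys k) /\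
    (* sqrt(chi_n)/c < y_1 < x_1 < y_2 < x_2 < ... *)
    sqrt (chi n) / c < ys 0%nat /\
    (forall k, ys k < xs k /\ xs k < ys (S k)).
Proof.
  intros Hc [_ [_ [Hnorm [_ [_ [_ [_ [_ [Hder Hode]]]]]]]]] Hchi.
  exact (spheroidal_roots_interlace c (chi n) (psi n) Hc Hchi (Hder n) (Hode n)
           (nonvanishing_of_unit_norm (psi n) (Hnorm n))).
Qed.
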